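(* For all integers $n\ge1$, $k\ge1$ and every sequence $\boldsymbol a$ of positive reals, with $\alpha_n(j;t)=A_n(j)\big(t^j-(t-1)^j\big)$, \[ \theta_{n;k}(t)=\frac1{k!}\det\begin{pmatrix} \alpha_n(1;t)&-1&0&\cdots&0\\ \alpha_n(2;t)&\alpha_n(1;t)&-2&\cdots&0\\ \vdots&\vdots&\vdots&\ddots&\vdots\\ \alpha_n(k-1;t)&\alpha_n(k-2;t)&\alpha_n(k-3;t)&\cdots&-(k-1)\\ \alpha_n(k;t)&\alpha_n(k-1;t)&\alpha_n(k-2;t)&\cdots&\alpha_n(1;t) \end{pmatrix}, \] i.e. the $k\times k$ matrix with entries $M_{i,j}=\alpha_n(i-j+1;t)$ for $j\le i$, $M_{i,i+1}=-i$, and $M_{i,j}=0$ for $j\ge i+2$.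
   Context: Let $\boldsymbol a=(a_j)_{j\ge1}$ be a sequence of positive reals. For integers $n\ge1$, $k\ge0$ let $\mathcal M_{n,k}=\{(\ell_1,\dots,\ell_k)\in\mathbb N^k: n\ge\ell_1\ge\cdots\ge\ell_k\ge1\}$. For $\vec\ell\in\mathcal M_{n,k}$ let $\sigma(\vec\ell)=|\{1\le j\le k-1:\ell_j=\ell_{j+1}\}|$ and $w(\vec\ell)=\prod_{j=1}^k a_{\ell_j}$. Define $\theta_{n;k}(t)=\sum_{\vec\ell\in\mathcal M_{n,k}}w(\vec\ell)\,t^{\sigma(\vec\ell)}$, and $A_n(j)=\sum_{m=1}^n a_m^j$. *)

From HB Require Import structures.
From mathcomp Require Import all_boot all_order all_algebra.
Set Implicit Arguments. Unset Strict Implicit. Unset Printing Implicit Defensive.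
Import Order.TTheory GRing.Theory Num.Theory.
Local Open Scope ring_scope.

(* A sequence a = (a_j)_{j>=1} is a function a : nat -> R (a 0 unused). *)

(* A k-tuple of elements of 'I_n, read as (l_1,...,l_k) with l_j = val + 1,
   so that l_j ranges over {1,...,n}. *)
Definition lseq (n k : nat) (l : k.-tuple 'I_n) : seq nat :=
  [seq (val i).+1 | i <- l].

Definition inM (n k : nat) (l : k.-tuple 'I_n) : bool :=
  sorted geq (lseq l).

Definition sigma (n k : nat) (l : k.-tuple 'I_n) : nat :=
  \sum_(j < k.-1) (nth 0%N (lseq l) j == nth 0%N (lseq l) j.+1).

Definition weight (R : ringType) (a : nat -> R) (n k : nat)
  (l : k.-tuple 'I_n) : R :=
  \prod_(x <- lseq l) a x.

Definition theta (R : comRingType) (a : nat -> R) (n k : nat) (t : R) : R :=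
  \sum_(l : k.-tuple 'I_n | inM l) weight a l * t ^+ sigma l.

Definition Apow (R : ringType) (a : nat -> R) (n j : nat) : R :=
  \sum_(1 <= m < n.+1) a m ^+ j.

Definition alpha (R : ringType) (a : nat -> R) (n j : nat) (t : R) : R :=
  Apow a n j * (t ^+ j - (t - 1) ^+ j).

(* The k x k matrix, 0-based indices i, j:
   entry alpha(i-j+1) if j <= i, -(i+1) if j = i+1, 0 otherwise
   (matches the 1-based M_{i,j} = alpha(i-j+1), M_{i,i+1} = -i). *)
Definition thetaMx (R : ringType) (a : nat -> R) (n k : nat) (t : R) : 'M[R]_k :=
  \matrix_(i < k, j < k)
    (if (j <= i)%N then alpha a n (i - j).+1 t
     else if j == i.+1 :> nat then - (i.+1)%:R else 0).

From HB Require Import structures.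
From mathcomp Require Import all_boot all_order all_algebra.
From mathcomp Require Import ring.
Set Implicit Arguments. Unset Strict Implicit. Unset Printing Implicit Defensive.
Import Order.TTheory GRing.Theory Num.Theory.
Local Open Scope ring_scope.

(* Grouping a weakly decreasing sequence with values in [1, m+1] by the length
   r of its leading run of (m+1)'s shows that the generating series
   S_m(z) = sum_k theta_{m;k}(t) z^k is the product over i <= m of
   U_{a_i}(z) = 1 + sum_{r >= 1} a_i^r t^(r-1) z^r.  A single factor satisfies
   z U_x'(z) = D_x(z) U_x(z) with D_x(z) = sum_j x^j (t^j - (t-1)^j) z^j, and
   z d/dz is a derivation, so z S_m' = (sum_j alpha_m(j;t) z^j) S_m: these are
   Newton's identities k theta_k = sum_j alpha(j) theta_(k-j).  Expanding the
   determinant along its last column yields the same recursion. *)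

Fixpoint ties (s : seq nat) : nat :=
  match s with
  | x :: ((y :: _) as s') => ((x == y) + ties s')%N
  | _ => 0%N
  end.

Lemma sum_adjacent_eq (s : seq nat) :
  (\sum_(j < (size s).-1) (nth 0%N s j == nth 0%N s j.+1))%N = ties s.
Proof.
elim: s => [|x [|y s] IH]; rewrite ?big_ord0 //=.
by rewrite big_ord_recl -[RHS]/(_ + ties (y :: s))%N -IH.
Qed.

Lemma ties_nseq_cat (x r : nat) (s : seq nat) : x \notin s ->
  ties (nseq r x ++ s) = (r.-1 + ties s)%N.
Proof.
move=> xs; elim: r => [|[|r] IH] //=.
  by case: s xs {IH} => [|y s] //=; rewrite inE eq_sym => /norP[/negbTE ->].
by move: IH => /= ->; rewrite eqxx.
Qed.

Definition decseq (m k : nat) (s : seq nat) : bool :=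
  [&& size s == k, sorted geq s & all (fun x => 0 < x <= m)%N s].

Fixpoint decseqs (m k : nat) : seq (seq nat) :=
  match m with
  | 0 => if k is 0 then [:: [::]] else [::]
  | m'.+1 => [seq nseq r m ++ s | r <- iota 0 k.+1, s <- decseqs m' (k - r)]
  end.

Lemma sorted_geq_nseq_cat (x r : nat) (s : seq nat) :
  all (fun y => y <= x)%N s -> sorted geq s -> sorted geq (nseq r x ++ s).
Proof.
move=> s_le_x s_sorted; elim: r => [|[|r] IH] //=.
  by case: s s_le_x s_sorted {IH} => [|y s] //= /andP[-> _] ->.
by move: IH => /= ->; rewrite leqnn.
Qed.

Lemma decseq_nseq_cat (m k r : nat) (s : seq nat) : (r <= k)%N ->
  decseq m (k - r) s -> decseq m.+1 k (nseq r m.+1 ++ s).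
Proof.
move=> le_rk /and3P[/eqP size_s s_sorted s_range].
have s_le : all (fun y => y <= m.+1)%N s by apply: sub_all s_range => y /andP[_ /leqW].
rewrite /decseq size_cat size_nseq size_s subnKC // eqxx sorted_geq_nseq_cat //=.
by rewrite all_cat all_nseq /= leqnn orbT; apply: sub_all s_range => y /andP[-> /leqW].
Qed.

Lemma decseq_top_split (m k : nat) (s : seq nat) : decseq m.+1 k s ->
  exists r s', [/\ (r <= k)%N, decseq m (k - r) s' & s = nseq r m.+1 ++ s'].
Proof.
elim: s k => [|x s IH] k /and3P[/eqP <- s_sorted s_range].
  by exists 0%N, [::].
have s_le_x : all (fun y => y <= x)%N s.
  by apply: order_path_min s_sorted => u v w /= le_vu le_wv; apply: leq_trans le_wv le_vu.
move: s_range => /= /andP[/andP[x_gt0 x_le] s_range].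
have s_decseq : decseq m.+1 (size s) s.
  by rewrite /decseq eqxx (path_sorted s_sorted).
case: (ltngtP x m.+1) x_le => // [x_lt|->] _.
  exists 0%N, (x :: s); split => //; rewrite /decseq eqxx s_sorted /= x_gt0 -ltnS x_lt.
  apply/allP => y ys; have /andP[-> _] := allP s_range y ys.
  by rewrite (leq_trans (allP s_le_x y ys)) // -ltnS.
have [r [s' [le_r s'_decseq def_s]]] := IH _ s_decseq.
by exists r.+1, s'; split; rewrite ?subSS // def_s.
Qed.

Lemma mem_decseqs (m k : nat) (s : seq nat) : (s \in decseqs m k) = decseq m k s.
Proof.
elim: m k s => [|m IH] k s.
  by case: k => [|k]; case: s => [|[|x] s]; rewrite /decseq //= !andbF.
apply/allpairsPdep/idP => [[r [s' [r_in s'_in ->]]]|].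
  by move: r_in; rewrite mem_iota add0n ltnS => le_rk; rewrite decseq_nseq_cat -?IH.
move=> /decseq_top_split [r [s' [le_r s'_decseq ->]]].
by exists r, s'; rewrite IH mem_iota add0n ltnS.
Qed.

Lemma decseqs_top_notin (m k : nat) (s : seq nat) :
  s \in decseqs m k -> m.+1 \notin s.
Proof.
rewrite mem_decseqs => /and3P[_ _ /allP s_range].
by apply/negP => /s_range /=; rewrite ltnn.
Qed.

Lemma decseqs_uniq (m k : nat) : uniq (decseqs m k).
Proof.
elim: m k => [|m IH] k; first by case: k.
apply: allpairs_uniq_dep => [|r _|]; rewrite ?iota_uniq //.
move=> [r1 s1] [r2 s2] /allpairsPdep [r1' [s1' [_ s1_in [e_r1 e_s1]]]]
  /allpairsPdep [r2' [s2' [_ s2_in [e_r2 e_s2]]]] /= E.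
subst r1' r2' s1' s2'.
have [m_s1 m_s2] := (decseqs_top_notin s1_in, decseqs_top_notin s2_in).
have : count_mem m.+1 (nseq r1 m.+1 ++ s1) = count_mem m.+1 (nseq r2 m.+1 ++ s2).
  by rewrite E.
rewrite !count_cat !count_nseq /= eqxx (count_memPn m_s1) (count_memPn m_s2).
rewrite !addn0 !mul1n => eq_r; subst r2.
by move/eqP: E; rewrite eqseq_cat // eqxx => /eqP ->.
Qed.

Section Convolution.
Variable R : comNzRingType.
Implicit Types f g h : nat -> R.

Definition conv f g (k : nat) : R := \sum_(i < k.+1) f i * g (k - i)%N.

Lemma conv_coefM f g (K k : nat) : (k <= K)%N ->
  conv f g k = (\poly_(i < K.+1) f i * \poly_(i < K.+1) g i)`_k.
Proof.
move=> le_kK; rewrite coefM; apply: eq_bigr => i _; rewrite !coef_poly.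
by rewrite !ltnS (leq_trans (leq_subr _ _) le_kK) (leq_trans _ le_kK) // -ltnS.
Qed.

Lemma eq_conv f1 f2 g1 g2 : f1 =1 f2 -> g1 =1 g2 -> conv f1 g1 =1 conv f2 g2.
Proof. by move=> ef eg k; apply: eq_bigr => i _; rewrite ef eg. Qed.

Lemma convC f g : conv f g =1 conv g f.
Proof. by move=> k; rewrite !(conv_coefM _ _ (leqnn k)) mulrC. Qed.

Lemma convA f g h : conv f (conv g h) =1 conv (conv f g) h.
Proof.
move=> k; pose P f := \poly_(i < k.+1) f i.
have -> : conv f (conv g h) k = (P f * (P g * P h))`_k.
  rewrite coefM; apply: eq_bigr => i _.
  by rewrite coef_poly ltn_ord (conv_coefM _ _ (leq_subr _ _)).
have -> : conv (conv f g) h k = (P f * P g * P h)`_k.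
  rewrite coefM; apply: eq_bigr => i _.
  by rewrite coef_poly ltnS leq_subr (conv_coefM _ _ (_ : i <= k)%N) // -ltnS.
by rewrite mulrA.
Qed.

Lemma convCA f g h : conv f (conv g h) =1 conv g (conv f h).
Proof. by move=> k; rewrite convA (eq_conv (convC f g) (frefl h) k) -convA. Qed.

Lemma convDl f1 f2 g :
  conv (fun j => f1 j + f2 j) g =1 (fun k => conv f1 g k + conv f2 g k).
Proof. by move=> k; rewrite /conv -big_split; apply: eq_bigr => i _; rewrite mulrDl. Qed.

Lemma conv_derivation f g (k : nat) :
  k%:R * conv f g k = conv (fun i => i%:R * f i) g k + conv f (fun i => i%:R * g i) k.
Proof.
rewrite mulr_sumr -big_split; apply: eq_bigr => i _ /=.
have le_ik : (i <= k)%N by rewrite -ltnS.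
by rewrite -{1}(subnKC le_ik) natrD; ring.
Qed.

End Convolution.

Section ThetaRecursion.
Variables (R : comNzRingType) (a : nat -> R) (t : R).

Definition thetaS (m k : nat) : R :=
  \sum_(s <- decseqs m k) (\prod_(x <- s) a x) * t ^+ ties s.

(* The truncated r.-1 makes the empty run weigh 1. *)
Definition run_weight (x : R) (r : nat) : R := x ^+ r * t ^+ r.-1.

Lemma thetaS0k (k : nat) : thetaS 0 k = (k == 0)%:R.
Proof. by case: k => [|k]; rewrite /thetaS /= ?big_nil // big_seq1 big_nil mul1r. Qed.

Lemma thetaSS (m : nat) : thetaS m.+1 =1 conv (run_weight (a m.+1)) (thetaS m).
Proof.
move=> k; rewrite /thetaS big_allpairs_dep -[iota 0 k.+1]/(index_iota 0 k.+1).
rewrite big_mkord.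
apply: eq_bigr => r _; rewrite mulr_sumr; apply: eq_big_seq => s s_in.
rewrite big_cat /= big_nseq iter_mulr_1 ties_nseq_cat ?(decseqs_top_notin s_in) //.
by rewrite exprD mulrACA.
Qed.

Lemma thetaSm0 (m : nat) : thetaS m 0 = 1.
Proof.
elim: m => [|m IH]; first by rewrite thetaS0k.
by rewrite thetaSS /conv big_ord1 IH /run_weight !expr0 !mulr1.
Qed.

Lemma theta_thetaS (n k : nat) : theta a n.+1 k t = thetaS n.+1 k.
Proof.
have lseq_inj : injective (@lseq n.+1 k).
  have succ_val_inj : injective (fun i : 'I_n.+1 => (val i).+1).
    by move=> i j [] /val_inj.
  by move=> l1 l2 /(inj_map succ_val_inj) /val_inj.
have perm_lseq :
    perm_eq [seq lseq l | l <- index_enum (k.-tuple 'I_n.+1) & inM l] (decseqs n.+1 k).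
  apply: uniq_perm; rewrite ?decseqs_uniq ?(map_inj_uniq lseq_inj) //.
    by rewrite filter_uniq ?index_enum_uniq.
  move=> s; rewrite mem_decseqs.
  apply/mapP/and3P => [[l]|[/eqP size_s s_sorted s_range]].
    rewrite mem_filter => /andP[l_in _] ->; rewrite /lseq size_map size_tuple.
    by split => //; rewrite all_map; apply/allP => i _ /=; rewrite ltn_ord.
  have size_s' : size [seq @inord n x.-1 | x <- s] == k by rewrite size_map size_s.
  have lseq_s' : lseq (Tuple size_s') = s.
    rewrite /lseq /= -map_comp; apply: map_id_in => x /(allP s_range) /andP[x_gt0 x_le].
    by rewrite /= inordK ?prednK // -ltnS prednK.
  by exists (Tuple size_s'); rewrite // mem_filter /inM lseq_s' s_sorted mem_index_enum.
rewrite /theta -big_filter /thetaS -(perm_big _ perm_lseq) big_map.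
by apply: eq_bigr => l _; rewrite /sigma -sum_adjacent_eq /lseq size_map size_tuple.
Qed.

Definition tdiff (j : nat) : R := t ^+ j - (t - 1) ^+ j.

Lemma sum_tdiff_run (r : nat) :
  \sum_(j < r.+1) tdiff j * t ^+ (r - j).-1 = r%:R * t ^+ r.-1.
Proof.
case: r => [|r]; first by rewrite big_ord1 /tdiff !expr0 subrr mulr0n !mul0r.
rewrite big_ord_recr /= subnn mulr1.
have -> : \sum_(j < r.+1) tdiff j * t ^+ (r.+1 - j).-1 =
    \sum_(j < r.+1) t ^+ r - \sum_(j < r.+1) t ^+ (r - j) * (t - 1) ^+ j.
  rewrite -sumrB; apply: eq_bigr => j _; have le_jr : (j <= r)%N by rewrite -ltnS.
  by rewrite subSn //= mulrBl -exprD subnKC // mulrC.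
(* factor t^(r+1) - (t-1)^(r+1) with subrXX, using t - (t-1) = 1 *)
rewrite -[X in _ - X]mul1r -[X in X * _](_ : t - (t - 1) = 1); last by rewrite subKr.
by rewrite -subrXX /tdiff subrK sumr_const card_ord mulr_natl.
Qed.

Lemma run_weight_newton (x : R) (r : nat) :
  r%:R * run_weight x r = conv (fun j => x ^+ j * tdiff j) (run_weight x) r.
Proof.
rewrite /run_weight mulrCA -sum_tdiff_run mulr_sumr; apply: eq_bigr => j _.
have le_jr : (j <= r)%N by rewrite -ltnS.
by rewrite -{1}(subnKC le_jr) exprD; ring.
Qed.

Lemma alphaS (m j : nat) :
  alpha a m.+1 j t = a m.+1 ^+ j * tdiff j + alpha a m j t.
Proof. by rewrite /alpha /Apow big_nat_recr //= mulrDl addrC. Qed.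

Lemma newton (m k : nat) :
  k%:R * thetaS m k = conv (fun j => alpha a m j t) (thetaS m) k.
Proof.
elim: m k => [|m IH] k.
  rewrite thetaS0k /conv big1 => [|i _]; last by rewrite /alpha /Apow big_geq ?mul0r.
  by case: k => [|k]; rewrite ?mulr0 ?mul0r.
set u := run_weight (a m.+1); have S_eq : thetaS m.+1 =1 conv u (thetaS m) := thetaSS m.
rewrite S_eq conv_derivation (eq_conv (run_weight_newton _) (frefl _) k) -convA.
by rewrite (eq_conv (frefl u) IH k) (eq_conv (alphaS m) S_eq k) convDl (convCA u).
Qed.

Lemma newton_shift (m k : nat) :
  \sum_(j < k.+1) alpha a m j.+1 t * thetaS m (k - j)%N = k.+1%:R * thetaS m k.+1.
Proof.
have alpha0 : alpha a m 0 t = 0 by rewrite /alpha !expr0 subrr mulr0.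
rewrite newton /conv [RHS]big_ord_recl alpha0 mul0r add0r.
by apply: eq_bigr => j _; rewrite subSS.
Qed.

End ThetaRecursion.

Section Determinant.
Variables (R : comNzRingType) (a : nat -> R) (n : nat) (t : R).

Definition lastRowMx (k : nat) (f : nat -> R) : 'M[R]_k :=
  \matrix_(i < k, j < k)
    (if i == k.-1 :> nat then f (k.-1 - j)%N else thetaMx a n k t i j).

Lemma thetaMx_lastRowMx (k : nat) :
  thetaMx a n k t = lastRowMx k (fun m => alpha a n m.+1 t).
Proof.
apply/matrixP => i j; rewrite !mxE; have [i_last|//] := eqVneq (i : nat) k.-1.
by rewrite i_last -ltnS prednK ?ltn_ord // (leq_ltn_trans _ (ltn_ord i)).
Qed.

Lemma lastRowMx_minor_last (k : nat) (f : nat -> R) :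
  row' ord_max (col' ord_max (lastRowMx k.+2 f)) =
  lastRowMx k.+1 (fun m => alpha a n m.+1 t).
Proof.
apply/matrixP => i j; rewrite -thetaMx_lastRowMx !mxE /= /bump.
by rewrite !(leqNgt k.+1) !ltn_ord /= (ltn_eqF (ltn_ord i)) !add0n.
Qed.

Lemma lastRowMx_minor_penult (k : nat) (f : nat -> R) :
  row' (widen_ord (leqnSn k.+1) ord_max) (col' ord_max (lastRowMx k.+2 f)) =
  lastRowMx k.+1 (fun m => f m.+1).
Proof.
apply/matrixP => i j; rewrite !mxE /= /bump (leqNgt k.+1 j) ltn_ord /= add0n.
have le_ik : (i <= k)%N by rewrite -ltnS.
have [->|ne_ik] := eqVneq (i : nat) k; first by rewrite leqnn add1n eqxx subSn // -ltnS.
have lt_ik : (i < k)%N by rewrite ltn_neqAle ne_ik.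
by rewrite leqNgt lt_ik add0n (ltn_eqF (ltn_trans lt_ik (ltnSn k))).
Qed.

(* The last column has only two nonzero entries, -(k+1) and f 0, so expanding
   along it reproduces Newton's recursion. *)
Lemma det_lastRowMx (k : nat) (f : nat -> R) :
  \det (lastRowMx k.+1 f) = k`!%:R * \sum_(m < k.+1) f m * thetaS a t n (k - m)%N.
Proof.
elim: k f => [|k IH] f.
  by rewrite det_mx11 mxE /= big_ord1 thetaSm0 !mul1r mulr1.
rewrite (expand_det_col _ ord_max) big_ord_recr big_ord_recr /=.
rewrite big1 ?add0r => [|i _]; last first.
  rewrite !mxE /= (ltn_eqF (ltn_trans (ltn_ord i) _)) // leqNgt ltnS ltnW //.
  by rewrite eqSS (gtn_eqF (ltn_ord i)) mul0r.
rewrite /cofactor lastRowMx_minor_last lastRowMx_minor_penult !IH !mxE /=.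
rewrite (ltn_eqF (ltnSn k)) ltnn !eqxx subnn newton_shift.
have sign_odd : (-1) ^+ (k + k.+1) = -1 :> R by rewrite -signr_odd oddD /= addbN addbb.
have sign_even : (-1) ^+ (k.+1 + k.+1) = 1 :> R by rewrite -signr_odd oddD addbb.
rewrite sign_odd sign_even factS natrM [in RHS]big_ord_recl subn0.
rewrite [in RHS](eq_bigr (fun m : 'I_k.+1 => f m.+1 * thetaS a t n (k - m))) => [|i _].
  by rewrite -mulNrn; ring.
by rewrite lift0 subSS.
Qed.

End Determinant.

Theorem mainTheorem4 (R : realFieldType) (a : nat -> R)
  (ha : forall j : nat, (0 < j)%N -> 0 < a j)
  (n k : nat) (hn : (1 <= n)%N) (hk : (1 <= k)%N) (t : R) :
  theta a n k t = (k`!%:R)^-1 * \det (thetaMx a n k t).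
Proof.
case: n hn => [//|n] _; case: k hk => [//|k] _.
rewrite theta_thetaS thetaMx_lastRowMx det_lastRowMx newton_shift mulrA -natrM mulnC -factS.
by rewrite mulKf // pnatr_eq0 -lt0n fact_gt0.
Qed.
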